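(* Let $X$ be a separable metrizable space such that $C_p(X)$ is countable dense homogeneous. Then $X$ is a $\gamma$-set.
   Context: $C_p(X)$ is the space of continuous functions $X\to\mathbb{R}$ with the pointwise convergence topology. A space $Y$ is countable dense homogeneous if it is separable and for any two countable dense $D,E\subseteq Y$ there is a homeomorphism $h\colon Y\to Y$ with $h[D]=E$. An open cover $\mathcal{U}$ of $X$ is an $\omega$-cover if $X\notin\mathcal{U}$ and every finite subset of $X$ is contained in some member of $\mathcal{U}$; a countable open cover $\{U_n\}$ is a $\gamma$-cover if it is infinite and each point of $X$ lies in all but finitely many $U_n$. $X$ is a $\gamma$-set if every open $\omega$-cover of $X$ contains a $\gamma$-cover as a subfamily. *)

From HB Require Import structures.
From mathcomp Require Import all_boot all_order all_algebra.
From mathcomp Require Import all_classical all_reals.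
From mathcomp Require Import topology normedtype.
From mathcomp Require Import Rstruct Rstruct_topology.
Set Implicit Arguments. Unset Strict Implicit. Unset Printing Implicit Defensive.
Import Order.TTheory GRing.Theory Num.Theory.
Local Open Scope classical_set_scope.
Local Open Scope ring_scope.

Notation R := Rdefinitions.R.

Definition metrizable (X : topologicalType) : Prop :=
  exists d : X -> X -> R,
    [/\ (forall x y, 0 <= d x y),
        (forall x y, d x y = 0 <-> x = y),
        (forall x y, d x y = d y x),
        (forall x y z, d x z <= d x y + d y z) &
        (forall A : set X, open A <->
           (forall x, A x -> exists2 e : R, 0 < e & [set y | d x y < e] `<=` A))].

Definition separable (X : topologicalType) : Prop :=
  exists D : set X, countable D /\ dense D.

Definition Cp (X : topologicalType) : set (X -> R) :=
  [set f | continuous f].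
Arguments Cp X : clear implicits.

(* Open subsets of C_p(X) for the topology of pointwise convergence
   (the subspace topology of the product R^X): U is open iff around each
   f in U some basic neighbourhood {g in C(X) | |g x - f x| < e, x in F},
   F finite, e > 0, is contained in U. *)
Definition Cp_open (X : topologicalType) (U : set (X -> R)) : Prop :=
  U `<=` Cp X /\
  forall f, U f -> exists F : seq X, exists2 e : R, 0 < e &
    forall g, Cp X g -> (forall x, x \in F -> `|g x - f x| < e) -> U g.

Definition Cp_dense (X : topologicalType) (D : set (X -> R)) : Prop :=
  D `<=` Cp X /\
  forall U, Cp_open U -> U !=set0 -> U `&` D !=set0.
Arguments Cp_dense X D : clear implicits.

Definition Cp_continuous (X : topologicalType) (h : (X -> R) -> (X -> R)) : Prop :=
  forall U, Cp_open U -> Cp_open ([set f | Cp X f /\ U (h f)]).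

Definition Cp_homeomorphism (X : topologicalType) (h : (X -> R) -> (X -> R)) : Prop :=
  (forall f, Cp X f -> Cp X (h f)) /\
  exists k : (X -> R) -> (X -> R),
    [/\ (forall f, Cp X f -> Cp X (k f)),
        (forall f, Cp X f -> k (h f) = f),
        (forall f, Cp X f -> h (k f) = f),
        Cp_continuous h & Cp_continuous k].
Arguments Cp_homeomorphism X h : clear implicits.

Definition Cp_separable (X : topologicalType) : Prop :=
  exists D, countable D /\ Cp_dense X D.

Definition Cp_CDH (X : topologicalType) : Prop :=
  Cp_separable X /\
  forall D E : set (X -> R), countable D -> Cp_dense X D ->
    countable E -> Cp_dense X E ->
    exists2 h, Cp_homeomorphism X h & h @` D = E.

Definition open_cover (X : topologicalType) (U : set (set X)) : Prop :=
  (forall A, U A -> open A) /\ (forall x, exists2 A, U A & A x).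

Definition omega_cover (X : topologicalType) (U : set (set X)) : Prop :=
  open_cover U /\ ~ U setT /\
  forall F : seq X, exists2 A, U A & forall x, x \in F -> A x.

(* a gamma-cover, given by an injective enumeration u of an infinite
   countable family: every point lies in all but finitely many u n *)
Definition gamma_sequence (X : topologicalType) (u : nat -> set X) : Prop :=
  injective u /\ (forall n, open (u n)) /\
  forall x : X, exists N, forall n, (N <= n)%N -> u n x.

Definition gamma_set (X : topologicalType) : Prop :=
  forall U : set (set X), omega_cover U ->
    exists u : nat -> set X, (forall n, U (u n)) /\ gamma_sequence u.

(* Fix an omega-cover U of X and a countable dense S in C_p(X).  Let D consist
   of 0 together with the functions that agree with some s in S on a finite
   union of small balls and are >= 1 off a member of U containing a slightly
   larger union of balls; D is countable, and it is dense because U is an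
   omega-cover.  Let E be the shifts of S by rationals.  A homeomorphism h with
   h[D] = E sends 0 to some e in E, and the functions e + 1/(n+1) lie in E and
   converge to e; pulling them back gives nonzero d_n in D converging pointwise
   to 0.  Each d_n is >= 1 off some U_n in U, so every point lies in all but
   finitely many U_n, and an injective subsequence of (U_n) is a gamma-cover. *)

From mathcomp Require Import all_boot all_order all_algebra.
From mathcomp Require Import all_classical all_reals topology.
From mathcomp Require Import normedtype Rstruct Rstruct_topology lra.
Set Implicit Arguments. Unset Strict Implicit.
Import Order.TTheory GRing.Theory Num.Theory.
Local Open Scope classical_set_scope.
Local Open Scope ring_scope.

Lemma countableU T (A B : set T) : countable A -> countable B -> countable (A `|` B).
Proof.
move=> Ac Bc; have -> : A `|` B = \bigcup_(b in [set: bool]) (if b then A else B).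
  by apply/seteqP; split=> [x [Ax|Bx]|x [[] _ ?]]; [exists true|exists false|left|right].
by apply: bigcup_countable => // -[].
Qed.

Lemma cofinite_injective_subseq T (w : nat -> set T) :
  (forall n, w n != setT) -> (forall x, exists N, forall n, (N <= n)%N -> w n x) ->
  exists s : nat -> nat, injective (w \o s) /\ forall n, (n <= s n)%N.
Proof.
move=> w_proper w_ev.
have /choice[N N_new] : forall j, exists N, forall m, (N <= m)%N -> w m <> w j.
  move=> j; have /setTPn[x wjx] := w_proper j.
  by have [M HM] := w_ev x; exists M => m /HM wmx wmj; apply: wjx; rewrite -wmj.
pose M n := \max_(j < n.+1) N j.
have M_new n m j : (M n <= m)%N -> (j <= n)%N -> w m <> w j.
  move=> Mm jn; apply: N_new; apply: leq_trans Mm.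
  exact: (@leq_bigmax _ (fun j : 'I_n.+1 => N j) (Ordinal (jn : j < n.+1)%N)).
(* [s] jumps past every index where an earlier term of [w \o s] can recur. *)
pose s k := iter k (fun n => maxn (M n) n.+1) 0%N.
have s_step k : (M (s k) <= s k.+1)%N /\ (s k < s k.+1)%N.
  by split; rewrite /= leq_max leqnn ?orbT.
have s_lt : {homo s : i j / (i < j)%N} := homo_ltn ltn_trans (fun k => (s_step k).2).
exists s; split; last by elim=> // n IH; apply: leq_ltn_trans IH (s_step n).2.
have s_new a b : (a < b)%N -> w (s b) <> w (s a).
  case: b => // b ab; apply: M_new (s_step b).1 _.
  by rewrite (leq_mono s_lt) -ltnS.
move=> a b /= wab; case: (ltngtP a b) => // ab; exfalso.
  exact: s_new _ _ ab (esym wab).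
exact: s_new _ _ ab wab.
Qed.

Section Cp_space.
Variable X : topologicalType.

Definition Cp_ball (f : X -> R) (F : seq X) (e : R) : set (X -> R) :=
  [set g | Cp X g /\
     exists2 del, 0 < del & forall x, x \in F -> `|g x - f x| < e - del].

Lemma Cp_ball_open f F e : Cp_open (Cp_ball f F e).
Proof.
split=> [g []//|g [gc [del del0 gf]]]; exists F, (del / 2); first by rewrite divr_gt0.
move=> g' g'c g'g; split=> //; exists (del / 2) => [|x xF]; first by rewrite divr_gt0.
by have := gf x xF; have := g'g x xF; have := ler_distD (g x) (g' x) (f x); lra.
Qed.

Lemma Cp_ball_center f F e : Cp X f -> 0 < e -> Cp_ball f F e f.
Proof.
move=> fc e0; split=> //; exists (e / 2) => [|x _]; first by rewrite divr_gt0.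
by rewrite subrr normr0; lra.
Qed.

Lemma Cp_dense_approx (S : set (X -> R)) f (F : seq X) e :
  Cp_dense X S -> Cp X f -> 0 < e ->
  exists2 s, S s & forall x, x \in F -> `|s x - f x| < e.
Proof.
move=> [_ Sd] fc e0.
have f_ball := Cp_ball_center F fc e0.
have [s [[_ [del del0 sf]] Ss]] := Sd _ (Cp_ball_open f F e) (ex_intro _ f f_ball).
by exists s => // x /sf; lra.
Qed.

Lemma Cp_denseS (S T : set (X -> R)) :
  S `<=` T -> T `<=` Cp X -> Cp_dense X S -> Cp_dense X T.
Proof. by move=> ST TC [_ Sd]; split=> // U Uo /(Sd U Uo)[f [Uf /ST Tf]]; exists f. Qed.

Definition Cp_cvg (u : nat -> X -> R) (f : X -> R) : Prop :=
  forall (F : seq X) (e : R), 0 < e ->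
    exists N, forall n, (N <= n)%N -> forall x, x \in F -> `|u n x - f x| < e.

Lemma Cp_continuous_cvg (k : (X -> R) -> X -> R) (u : nat -> X -> R) f :
  Cp_continuous k -> Cp X f -> Cp X (k f) -> (forall n, Cp X (u n)) ->
  Cp_cvg u f -> Cp_cvg (k \o u) (k f).
Proof.
move=> k_cont fc kfc uc u_cvg F e e0.
have kf_ball := Cp_ball_center F kfc e0.
have [F' [del del0 k_near]] := (k_cont _ (Cp_ball_open (k f) F e)).2 f (conj fc kf_ball).
have [N uN] := u_cvg F' del del0; exists N => n /uN un x xF.
by have [_ [_ [del' del'0 /(_ x xF)]]] := k_near (u n) (uc n) un; rewrite /=; lra.
Qed.

End Cp_space.

Definition is_metric (X : topologicalType) (d : X -> X -> R) : Prop :=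
  [/\ (forall x y, 0 <= d x y),
      (forall x y, d x y = 0 <-> x = y),
      (forall x y, d x y = d y x),
      (forall x y z, d x z <= d x y + d y z) &
      (forall A : set X, open A <->
         (forall x, A x -> exists2 e : R, 0 < e & [set y | d x y < e] `<=` A))].

Section metric.
Variables (X : topologicalType) (d : X -> X -> R).
Hypothesis d_metric : is_metric d.

Let d_ge0 x y : 0 <= d x y. Proof. by case: d_metric. Qed.
Let d_sym x y : d x y = d y x. Proof. by case: d_metric. Qed.
Let d_triangle x y z : d x z <= d x y + d y z. Proof. by case: d_metric. Qed.
Let d_open A : open A <->
  (forall x, A x -> exists2 e : R, 0 < e & [set y | d x y < e] `<=` A).
Proof. by case: d_metric. Qed.
Let d_xx x : d x x = 0. Proof. by case: d_metric => _ d_eq0 _ _ _; exact/d_eq0. Qed.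

Lemma open_dball x e : open [set y | d x y < e].
Proof.
apply/d_open => y /= dxy; exists (e - d x y); first by rewrite subr_gt0.
by move=> z /= dyz; have := d_triangle x y z; lra.
Qed.

Lemma continuous_dist_to p : continuous (d ^~ p).
Proof.
move=> x; apply/(@cvgrPdist_lt _ R^o) => e e0.
have dx : open_nbhs x [set y | d x y < e] by split; [exact: open_dball | rewrite /= d_xx].
apply: filterS (open_nbhs_nbhs dx) => y /= dxy; rewrite ltr_norml; apply/andP; split.
  by have := d_triangle y x p; rewrite (d_sym y x); lra.
by have := d_triangle x y p; lra.
Qed.

Lemma countable_dense_seq (Q : set X) (x0 : X) : countable Q -> dense Q ->
  exists q : nat -> X, forall x e, 0 < e -> exists n, d x (q n) < e.
Proof.
move=> Qc Qd; have [g g_surj] : exists g : nat -> option X, set_surj setT (some @` Q) g.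
  by apply/surjPex; apply/ocard_geP.
exists (fun n => odflt x0 (g n)) => x e e0.
have [|y [/= dxy Qy]] := Qd _ _ (open_dball x e); first by exists x; rewrite /= d_xx.
by have [n _ gn] := g_surj (Some y) (ex_intro2 _ _ y Qy erefl); exists n; rewrite gn.
Qed.

Variables (q : nat -> X).
Hypothesis q_dense : forall x e, 0 < e -> exists n, d x (q n) < e.

(* A pair [(j, m)] stands for the ball of radius [c / (m + 1)] around [q j]. *)
Definition balls (c : R) (L : seq (nat * nat)) : set X :=
  [set x | exists2 p, p \in L & (p.2.+1)%:R * d x (q p.1) < c].

Definition gauge (L : seq (nat * nat)) (x : X) : R :=
  foldr (fun p acc => Num.min ((p.2.+1)%:R * d x (q p.1) - 1) acc) 1 L.

Definition raise (L : seq (nat * nat)) (g : X -> R) (x : X) : R :=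
  g x + Num.max 0 (gauge L x) * (`|g x| + 1).

Lemma continuous_gauge L : continuous (gauge L).
Proof.
elim: L => [|p L IH] x; first exact: cst_continuous.
have -> : gauge (p :: L) = (fun y => p.2.+1%:R * d y (q p.1) - 1) \min gauge L by [].
apply: continuous_min (IH x); apply: continuousB; last exact: cst_continuous.
by apply: continuousM; [exact: cst_continuous | exact: continuous_dist_to].
Qed.

Lemma continuous_raise L g : continuous g -> continuous (raise L g).
Proof.
move=> gc x.
have -> : raise L g = g + (cst 0 \max gauge L) * (Num.norm \o g + cst 1) by [].
apply: (@continuousD R R^o X); first exact: gc.
apply: (@continuousM R X).
  by apply: continuous_max; [exact: cst_continuous | exact: continuous_gauge].
apply: (@continuousD R R^o X); last exact: cst_continuous.
exact: continuous_comp (gc x) (@norm_continuous R R^o _).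
Qed.

Lemma gauge_le0 L x : balls 1 L x -> gauge L x <= 0.
Proof.
elim: L => [|p' L IH] [p]; first by rewrite in_nil.
rewrite in_cons /gauge /= -/(gauge L x) ge_min => /orP[/eqP -> px|pL px]; apply/orP.
  by left; lra.
by right; apply: IH; exists p.
Qed.

Lemma gauge_ge1 L x : ~ balls 2 L x -> 1 <= gauge L x.
Proof.
elim: L => [|p L IH] Lx //=; rewrite le_min; apply/andP; split.
  by rewrite leNgt; apply/negP => px; apply: Lx; exists p; rewrite ?mem_head //; lra.
by apply: IH => -[p' p'L ?]; apply: Lx; exists p'; rewrite // in_cons p'L orbT.
Qed.

Lemma raise_id L g x : balls 1 L x -> raise L g x = g x.
Proof. by move/gauge_le0 => ?; rewrite /raise max_l // mul0r addr0. Qed.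

Lemma raise_ge1 L g x : ~ balls 2 L x -> 1 <= raise L g x.
Proof.
move/gauge_ge1 => ?; rewrite /raise max_r; last lra.
have := ler_norm (- g x); rewrite normrN; have := normr_ge0 (g x); nra.
Qed.

Lemma balls_separate (U : set X) (F : seq X) :
  open U -> (forall x, x \in F -> U x) ->
  exists L, balls 2 L `<=` U /\ (forall x, x \in F -> balls 1 L x).
Proof.
move=> Uo; elim: F => [_|x F IH FU]; first by exists [::]; split=> [? []|].
have [|L [LU FL]] := IH; first by move=> y yF; apply: FU; rewrite in_cons yF orbT.
have [e e0 eU] := (d_open U).1 Uo x (FU x (mem_head _ _)).
(* A point within [1/(m+1)] of [q j] puts [balls 2 [:: (j, m)]] inside the
   ball of radius [3/(m+1) < e] around [x]. *)
set m := Num.truncn (3 / e); have m_gt : 3 / e < m.+1%:R by exact: truncnS_gt.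
rewrite ltr_pdivrMr // in m_gt; have m0 : 0 < m.+1%:R :> R by rewrite ltr0n.
have [j dxj] : exists j, m.+1%:R * d x (q j) < 1.
  have [|j dxj] := @q_dense x (m.+1%:R^-1); first by rewrite invr_gt0.
  by exists j; rewrite -(ltr_pM2l m0) mulfV ?gt_eqF in dxj.
exists ((j, m) :: L); split.
  move=> y [p]; rewrite in_cons => /orP[/eqP -> /= dyj|pL py].
    apply: eU => /=; have := d_triangle x (q j) y; rewrite (d_sym (q j) y).
    by move: (d_ge0 x (q j)) (d_ge0 y (q j)) => *; nra.
  by apply: LU; exists p.
move=> y; rewrite in_cons => /orP[/eqP ->|/FL[p pL py]].
  by exists (j, m); rewrite ?mem_head.
by exists p; rewrite // in_cons pL orbT.
Qed.

Variables (UU : set (set X)) (S : set (X -> R)).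

Definition subordinate (L : seq (nat * nat)) := exists2 U, UU U & balls 2 L `<=` U.

Definition cover_raisings : set (X -> R) :=
  [set cst 0] `|` (fun p => raise p.1 p.2) @` (subordinate `*` S).

Lemma cover_raisings_Cp : S `<=` Cp X -> cover_raisings `<=` Cp X.
Proof.
move=> SC _ [->|[[L s] [_ /SC sc] <-]]; last exact: continuous_raise.
by move=> x; exact: cst_continuous.
Qed.

Lemma countable_cover_raisings : countable S -> countable cover_raisings.
Proof.
move=> Sc; apply: countableU (countable1 _) _.
exact: sub_countable (card_image_le _ _) (countableX (countableP _) Sc).
Qed.

Lemma Cp_dense_cover_raisings : (forall U, UU U -> open U) ->
  (forall F : seq X, exists2 A, UU A & forall x, x \in F -> A x) ->
  Cp_dense X S -> Cp_dense X cover_raisings.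
Proof.
move=> UU_open UU_fin Sd.
split=> [|U [UC Uo] [f Uf]]; first exact: cover_raisings_Cp Sd.1.
have [F [e e0 fU]] := Uo f Uf; have [s Ss sf] := Cp_dense_approx F Sd (UC f Uf) e0.
have [A UA FA] := UU_fin F; have [L [LA FL]] := balls_separate (UU_open A UA) FA.
exists (raise L s); split; last by right; exists (L, s) => //; split=> //; exists A.
apply: fU => [|x xF]; first exact: continuous_raise (Sd.1 s Ss).
by rewrite raise_id; [exact: sf | exact: FL].
Qed.

Lemma cover_raisings_off_cover f : cover_raisings f -> f <> cst 0 ->
  exists2 U, UU U & forall x, ~ U x -> 1 <= f x.
Proof.
case=> [->//|[[L s] [[U UU_U LU] _] <-]] _.
by exists U => // x Ux; apply: raise_ge1 => /LU.
Qed.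

End metric.

Section rat_shifts.
Variables (X : topologicalType) (S : set (X -> R)).

Definition rat_shifts : set (X -> R) :=
  [set f | exists2 s, S s & exists r : rat, f = fun x => s x + ratr r].

Lemma rat_shifts_Cp : S `<=` Cp X -> rat_shifts `<=` Cp X.
Proof.
move=> SC _ [s /SC sc [r ->]] x.
by apply: (@continuousD R R^o X); [exact: sc | exact: cst_continuous].
Qed.

Lemma countable_rat_shifts : countable S -> countable rat_shifts.
Proof.
move=> Sc; pose shift (p : (X -> R) * rat) x := p.1 x + ratr p.2.
have -> : rat_shifts = shift @` (S `*` setT).
  apply/seteqP; split=> [_ [s Ss [r ->]]|_ [[s r] [/= Ss _] <-]]; first by exists (s, r).
  by exists s => //; exists r.
exact: sub_countable (card_image_le _ _) (countableX Sc (countableP _)).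
Qed.

Lemma Cp_dense_rat_shifts : Cp_dense X S -> Cp_dense X rat_shifts.
Proof.
move=> Sd; apply: (Cp_denseS _ (rat_shifts_Cp Sd.1) Sd) => s Ss.
by exists s => //; exists 0; apply: funext => x; rewrite rmorph0 addr0.
Qed.

Lemma rat_shifts_approx (x0 : X) f : rat_shifts f ->
  exists u : nat -> X -> R, (forall n, rat_shifts (u n) /\ u n <> f) /\ Cp_cvg u f.
Proof.
move=> [s Ss [r ->]]; exists (fun n x => s x + ratr r + n.+1%:R^-1); split.
  move=> n; split; first by exists s => //; exists (r + n.+1%:R^-1); apply: funext => x;
    rewrite rmorphD fmorphV rmorph_nat addrA.
  move/(congr1 (fun g => g x0 - (s x0 + ratr r))); rewrite addrC addKr subrr => /eqP.
  by rewrite invr_eq0 pnatr_eq0.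
move=> F e e0; exists (Num.truncn e^-1) => n Nn x _.
rewrite addrC addKr ger0_norm ?invr_ge0 ?ler0n // invf_plt ?posrE ?ltr0Sn //.
by apply: lt_le_trans (truncnS_gt _) _; rewrite ler_nat.
Qed.

End rat_shifts.

Section Cp_homeomorphism_cover.
Variables (X : topologicalType) (UU : set (set X)) (D E : set (X -> R)).
Variables (h k : (X -> R) -> (X -> R)).
Hypotheses (D_Cp : D `<=` Cp X) (E_Cp : E `<=` Cp X) (hDE : h @` D = E).
Hypotheses (kh : forall f, Cp X f -> k (h f) = f) (k_cont : Cp_continuous k).
Hypothesis D0 : D (cst 0).
Hypothesis D_off_cover : forall f, D f -> f <> cst 0 ->
  exists2 U, UU U & forall x, ~ U x -> 1 <= f x.
Hypothesis E_approx : forall f, E f ->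
  exists u : nat -> X -> R, (forall n, E (u n) /\ u n <> f) /\ Cp_cvg u f.

Lemma Cp_homeomorphism_cover_seq :
  exists w : nat -> set X, (forall n, UU (w n)) /\
    forall x, exists N, forall n, (N <= n)%N -> w n x.
Proof.
have cst0_Cp : Cp X (cst 0) by move=> x; exact: cst_continuous.
have E_h0 : E (h (cst 0)) by rewrite -hDE; exists (cst 0).
have [u [uE u_cvg]] := E_approx E_h0.
have /choice[v vD] : forall n, exists v, D v /\ h v = u n.
  by move=> n; have := (uE n).1; rewrite -hDE => -[v ? ?]; exists v.
have v_cvg : Cp_cvg v (cst 0).
  have -> : v = k \o u.
    by apply: funext => n /=; rewrite -(vD n).2 kh //; exact/D_Cp/(vD n).1.
  rewrite -(kh cst0_Cp); apply: Cp_continuous_cvg => //; first exact: E_Cp.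
    by rewrite kh.
  by move=> n; exact/E_Cp/(uE n).1.
have /choice[w wU] : forall n, exists w, UU w /\ forall x, ~ w x -> 1 <= v n x.
  move=> n; have [|U ? ?] := D_off_cover (vD n).1; last by exists U.
  by move=> v0; apply: (uE n).2; rewrite -(vD n).2 v0.
exists w; split=> [n|x]; first exact: (wU n).1.
have [N vN] := v_cvg [:: x] 1 ltr01; exists N => n /vN /(_ x (mem_head _ _)) vx.
rewrite /= subr0 in vx; apply: contrapT => wx.
by have := (wU n).2 x wx; have := ler_norm (v n x); lra.
Qed.

End Cp_homeomorphism_cover.

Theorem mainTheorem17 (X : topologicalType) :
  separable X -> metrizable X -> Cp_CDH X -> gamma_set X.
Proof.
move=> [Q [Qc Qd]] [d d_metric] [[S [Sc Sd]] cdh] UU.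
move=> [[UU_open _] [UU_nT UU_fin]].
have UU_proper A : UU A -> A != setT.
  by move=> UA; apply/eqP => AT; apply: UU_nT; rewrite -AT.
have [A /UU_proper/setTPn[x0 _] _] := UU_fin [::].
have [q q_dense] := countable_dense_seq d_metric x0 Qc Qd.
pose D := cover_raisings d q UU S; pose E := rat_shifts S.
have [h [_ [k [_ kh _ _ k_cont]]] hDE] := cdh D E
  (countable_cover_raisings _ _ _ Sc)
  (Cp_dense_cover_raisings d_metric q_dense UU_open UU_fin Sd)
  (countable_rat_shifts Sc) (Cp_dense_rat_shifts Sd).
have [w [UU_w w_ev]] := Cp_homeomorphism_cover_seq
  (cover_raisings_Cp d_metric (q:=q) (UU:=UU) Sd.1) (rat_shifts_Cp Sd.1) hDE kh k_cont
  (or_introl erefl) (@cover_raisings_off_cover _ d q UU S) (rat_shifts_approx x0).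
have [s [ws_inj s_ge]] := cofinite_injective_subseq (fun n => UU_proper _ (UU_w n)) w_ev.
exists (w \o s); split=> [n|]; first exact: UU_w.
split=> //; split=> [n|x]; first exact/UU_open/UU_w.
by have [N wN] := w_ev x; exists N => n Nn; apply/wN/(leq_trans Nn).
Qed.
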